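(* Let $\mathcal{X}$ be an infinite domain and $l\ge1$ an integer. Then for every integer $m\ge0$ there exists an $(l-1,m)$-difficult extended mistake tree with respect to $\mathcal{C}^l$ all of whose dashed edges are labeled $+1$ (i.e. go to the right child).
   Context: $\mathcal{C}^l$ is the class of functions $\mathcal{X}\to\{-1,+1\}$ of the form $x\mapsto1-2I(x\in D)$ with $D\subseteq\mathcal{X}$, $|D|\le l$. Extended mistake tree w.r.t. a class $\mathcal{H}$: a finite full binary tree (possibly a single leaf) in which each internal node $v$ is labeled by $x_v\in\mathcal{X}$ and has two solid downward edges, to its left child (label $-1$) and right child (label $+1$), plus one dashed downward edge to one of its two children, whose label is the label of that child's direction; each leaf is labeled by some $h\in\mathcal{H}$ with $h(x_v)$ equal to the direction label at every internal node $v$ on the root-to-leaf path. A root-to-leaf path chooses at each internal node one downward edge; its length is its number of edges. The tree is $(k,m)$-difficult if every root-to-leaf path using at most $k$ solid edges has length at least $m$. *)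

From Stdlib Require Import ZArith List Arith.
Import ListNotations.

Definition infinite_type (X : Type) : Prop :=
  forall s : list X, exists x : X, ~ In x s.

(* A subset D with |D| <= l is represented by a list of length <= l
   (its set of elements). h x = -1 if x \in D and h x = +1 otherwise. *)
Definition Cl (X : Type) (l : nat) (h : X -> Z) : Prop :=
  exists D : list X, (length D <= l)%nat /\
    forall x, (In x D /\ h x = (-1)%Z) \/ (~ In x D /\ h x = 1%Z).

(* Node x d L R : internal node labeled x, left child L (label -1),
   right child R (label +1); the dashed edge goes to the right child
   iff d = true (label +1), to the left child iff d = false (label -1). *)
Inductive emtree (X : Type) : Type :=
| Leaf : (X -> Z) -> emtree X
| Node : X -> bool -> emtree X -> emtree X -> emtree X.
Arguments Leaf {X} _.
Arguments Node {X} _ _ _ _.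

Fixpoint emt_valid_aux {X : Type} (H : (X -> Z) -> Prop)
    (acc : list (X * Z)) (t : emtree X) : Prop :=
  match t with
  | Leaf h => H h /\ Forall (fun p => h (fst p) = snd p) acc
  | Node x _ L R =>
      emt_valid_aux H ((x, (-1)%Z) :: acc) L /\
      emt_valid_aux H ((x, 1%Z) :: acc) R
  end.

Definition emt_valid {X : Type} (H : (X -> Z) -> Prop) (t : emtree X) : Prop :=
  emt_valid_aux H [] t.

Inductive emt_path {X : Type} : emtree X -> nat -> nat -> Prop :=
| path_leaf : forall h, emt_path (Leaf h) 0 0
| path_solid_left : forall x d L R s n,
    emt_path L s n -> emt_path (Node x d L R) (S s) (S n)
| path_solid_right : forall x d L R s n,
    emt_path R s n -> emt_path (Node x d L R) (S s) (S n)
| path_dashed : forall x (d : bool) L R s n,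
    emt_path (if d then R else L) s n -> emt_path (Node x d L R) s (S n).

Definition difficult {X : Type} (k m : nat) (t : emtree X) : Prop :=
  forall s n, emt_path t s n -> (s <= k)%nat -> (m <= n)%nat.

Fixpoint all_dashed_right {X : Type} (t : emtree X) : Prop :=
  match t with
  | Leaf _ => True
  | Node _ d L R => d = true /\ all_dashed_right L /\ all_dashed_right R
  end.

(** The tree is built greedily: every internal node queries a point not yet
    seen on its path, its dashed edge goes right, and a branch stops once it
    has [l] left turns or has reached depth [m].  A leaf is labelled by the
    hypothesis that is [-1] exactly on the points where the path turned left;
    there are at most [l] of them, so it lies in [C^l].  A path with at most
    [l - 1] solid edges has fewer than [l] left turns, so it only stops at
    depth [m]. *)
From Stdlib Require Import ZArith List Arith Lia ClassicalEpsilon.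
Import ListNotations.

Definition hyp_of {X : Type} (D : list X) : X -> Z :=
  fun y => if excluded_middle_informative (In y D) then (-1)%Z else 1%Z.

Lemma hyp_of_in {X : Type} (D : list X) y : In y D -> hyp_of D y = (-1)%Z.
Proof.
  intro Hy. unfold hyp_of.
  destruct (excluded_middle_informative (In y D)); tauto.
Qed.

Lemma hyp_of_notin {X : Type} (D : list X) y : ~ In y D -> hyp_of D y = 1%Z.
Proof.
  intro Hy. unfold hyp_of.
  destruct (excluded_middle_informative (In y D)); tauto.
Qed.

Lemma hyp_of_cons_neq {X : Type} (D : list X) x y :
  y <> x -> hyp_of (x :: D) y = hyp_of D y.
Proof.
  intro Hyx. unfold hyp_of.
  destruct (excluded_middle_informative (In y (x :: D))) as [Hin|Hin];
  destruct (excluded_middle_informative (In y D)) as [Hin'|Hin']; auto.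
  - destruct Hin as [->|Hin]; tauto.
  - exfalso. apply Hin. now right.
Qed.

Lemma Cl_hyp_of {X : Type} (l : nat) (D : list X) :
  length D <= l -> Cl X l (hyp_of D).
Proof.
  intro Hlen. exists D. split; [exact Hlen|]. intro x.
  destruct (excluded_middle_informative (In x D)) as [Hx|Hx].
  - left. split; [exact Hx|]. now apply hyp_of_in.
  - right. split; [exact Hx|]. now apply hyp_of_notin.
Qed.

Definition consistent {X : Type} (h : X -> Z) (acc : list (X * Z)) : Prop :=
  Forall (fun p => h (fst p) = snd p) acc.

Lemma consistent_cons_fresh {X : Type} (D : list X) (acc : list (X * Z)) x :
  ~ In x (map fst acc) -> consistent (hyp_of D) acc ->
  consistent (hyp_of (x :: D)) acc.
Proof.
  intros Hx Hacc. unfold consistent in *. rewrite Forall_forall in *.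
  intros p Hp. rewrite hyp_of_cons_neq by (intros <-; apply Hx, in_map, Hp).
  now apply Hacc.
Qed.

Section GreedyTree.

Variable X : Type.
Hypothesis Hinf : infinite_type X.

Definition fresh (s : list X) : X :=
  proj1_sig (constructive_indefinite_description _ (Hinf s)).

Lemma fresh_notin (s : list X) : ~ In (fresh s) s.
Proof. exact (proj2_sig (constructive_indefinite_description _ (Hinf s))). Qed.

(* [budget] is the number of left turns still allowed, [D] the points at which
   the path so far turned left, and [acc] the labelled points of the path. *)
Fixpoint greedy_tree (depth budget : nat) (D : list X) (acc : list (X * Z))
    : emtree X :=
  match depth, budget with
  | S depth', S budget' =>
      let x := fresh (D ++ map fst acc) in
      Node x true
        (greedy_tree depth' budget' (x :: D) ((x, (-1)%Z) :: acc))
        (greedy_tree depth' budget D ((x, 1%Z) :: acc))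
  | _, _ => Leaf (hyp_of D)
  end.

Lemma greedy_tree_dashed_right depth :
  forall budget D acc, all_dashed_right (greedy_tree depth budget D acc).
Proof.
  induction depth as [|depth IH]; intros [|budget] D acc; simpl; auto.
Qed.

Lemma greedy_tree_valid (l : nat) depth :
  forall budget D acc,
    length D + budget <= l -> consistent (hyp_of D) acc ->
    emt_valid_aux (Cl X l) acc (greedy_tree depth budget D acc).
Proof.
  induction depth as [|depth IH]; intros budget D acc Hlen Hacc;
  [|destruct budget as [|budget]];
  try (split; [apply Cl_hyp_of; lia | exact Hacc]).
  simpl. set (x := fresh (D ++ map fst acc)).
  assert (Hx : ~ In x D /\ ~ In x (map fst acc)).
  { pose proof (fresh_notin (D ++ map fst acc)) as Hfresh.
    rewrite in_app_iff in Hfresh. tauto. }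
  split; apply IH.
  - simpl. lia.
  - constructor; [now apply hyp_of_in; left|].
    now apply consistent_cons_fresh.
  - lia.
  - constructor; [now apply hyp_of_notin|exact Hacc].
Qed.

Lemma greedy_tree_path_long depth :
  forall budget D acc s n, emt_path (greedy_tree depth budget D acc) s n ->
    depth <= n \/ budget <= s.
Proof.
  induction depth as [|depth IH]; intros [|budget] D acc s n Hpath;
  try lia.
  inversion Hpath; subst;
  match goal with H : emt_path _ _ _ |- _ => apply IH in H end; lia.
Qed.

End GreedyTree.

Theorem mainTheorem19 :
  forall (X : Type), infinite_type X ->
  forall (l : nat), (1 <= l)%nat ->
  forall (m : nat),
    exists t : emtree X,
      emt_valid (Cl X l) t /\ difficult (l - 1) m t /\ all_dashed_right t.
Proof.
  intros X Hinf l Hl m.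
  exists (greedy_tree X Hinf m l [] []).
  split; [|split].
  - apply greedy_tree_valid; [simpl; lia | constructor].
  - intros s n Hpath Hs.
    destruct (greedy_tree_path_long X Hinf m l [] [] s n Hpath); lia.
  - apply greedy_tree_dashed_right.
Qed.
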